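(* There is a universal constant $C>0$ and, for every positive integer $T$, a (randomized) forecasting algorithm for the $T$-step sequential binary prediction game such that against every (possibly adaptive and randomized) adversary, $\mathbb{E}[\mathsf{CalDist}(x,p)] \le C\sqrt{T}$, where $x$ is the sequence of outcomes and $p$ the sequence of predictions.
   Context: Sequential binary prediction game with horizon $T$: at each step $t \in [T]$, the adversary picks a bit $x_t \in \{0,1\}$ and simultaneously the forecaster picks a prediction $p_t \in [0,1]$; both may depend on all previous outcomes and predictions (and on their own randomness); then $x_t,p_t$ are revealed to both. For $x \in \{0,1\}^T$, let $\mathcal{C}(x) = \{q \in [0,1]^T : \sum_{t=1}^T (x_t - q_t)\mathbf{1}[q_t = \alpha] = 0 \text{ for all } \alpha \in [0,1]\}$, and $\mathsf{CalDist}(x,p) = \min_{q \in \mathcal{C}(x)} \|p - q\|_1$. The expectation is over the randomness of both players. *)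

From HB Require Import structures.
From mathcomp Require Import all_boot all_order all_algebra.
From mathcomp Require Import boolp classical_sets reals.
Unset Printing Implicit Defensive.
Import Order.TTheory GRing.Theory Num.Theory.
Local Open Scope ring_scope.
Local Open Scope classical_set_scope.

Section CalDist.
Variable R : realType.
Implicit Types (T : nat).

Definition calib_set (T : nat) (x : 'I_T -> bool) : set ('I_T -> R) :=
  [set q | (forall t, 0 <= q t <= 1) /\
           forall a : R, \sum_(t < T) ((x t)%:R - q t) * (q t == a)%:R = 0].

(* CalDist(x,p) = min_{q in C(x)} ||p - q||_1  (the min is attained: C(x) is
   finite and nonempty; we use the infimum, which equals it). *)
Definition CalDist (T : nat) (x : 'I_T -> bool) (p : 'I_T -> R) : R :=
  inf [set \sum_(t < T) `|p t - q t| | q in @calib_set T x].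

Definition history := seq (bool * R).

Definition hist_x (T : nat) (h : history) : 'I_T -> bool :=
  fun t => (nth (false, 0) h t).1.
Definition hist_p (T : nat) (h : history) : 'I_T -> R :=
  fun t => (nth (false, 0) h t).2.

(* Randomized forecaster (behavioural strategy): given the history, a finitely
   supported distribution over predictions, as a list of (weight, prediction). *)
Definition forecaster := history -> seq (R * R).

Definition valid_forecaster (F : forecaster) : Prop :=
  forall h : history,
    (forall wp, wp \in F h -> 0 <= wp.1 /\ 0 <= wp.2 <= 1) /\
    \sum_(wp <- F h) wp.1 = 1.

(* Randomized adaptive adversary (behavioural strategy): given the history,
   the probability of choosing x_t = 1. *)
Definition adversary := history -> R.

Definition valid_adversary (A : adversary) : Prop :=
  forall h : history, 0 <= A h <= 1.

(* Expected value of L(final history) when the game is played for n more steps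
   from history h; at each step x_t and p_t are drawn independently given h
   (simultaneous moves), then both are revealed. *)
Fixpoint play (F : forecaster) (A : adversary) (L : history -> R)
    (n : nat) (h : history) : R :=
  match n with
  | 0 => L h
  | n'.+1 =>
      \sum_(wp <- F h)
        wp.1 * (A h * play F A L n' (rcons h (true, wp.2)) +
                (1 - A h) * play F A L n' (rcons h (false, wp.2)))
  end.

Definition expected_CalDist (T : nat) (F : forecaster) (A : adversary) : R :=
  play F A (fun h => @CalDist T (hist_x T h) (hist_p T h)) T [::].

End CalDist.

(* The forecaster is deterministic. For the grid points k/m (k = 0..m) it keeps
   counters c_k = sum of (x_t - k/m) over the rounds t charged to bucket k. It
   predicts at a crossing point i/m with c_i >= 0 >= c_(i+1), and charges an
   outcome 1 to bucket i+1 and an outcome 0 to bucket i; this keeps every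
   counter in [-1, 1], and each prediction is within 1/m of the grid value of
   its bucket. Replacing all predictions of bucket k by the empirical mean of
   the outcomes of that bucket yields a calibrated sequence, at L1 distance at
   most T/m + sum_k |c_k| <= T/m + m + 1 from p; m = floor (sqrt T) gives
   6 sqrt T. *)

From HB Require Import structures.
From mathcomp Require Import all_boot all_order all_algebra.
From mathcomp Require Import boolp classical_sets reals.
From mathcomp Require Import lra zify.
Import Order.TTheory GRing.Theory Num.Theory.
Local Open Scope ring_scope.

Arguments calib_set {R T}.
Arguments CalDist {R T}.
Arguments valid_forecaster {R}.
Arguments valid_adversary {R}.
Arguments play {R}.
Arguments hist_x {R}.
Arguments hist_p {R}.
Arguments expected_CalDist {R}.

Section Bucketing.
Context {R : realType} {T : nat} {I : finType}.
Variables (x : 'I_T -> bool) (g : 'I_T -> I).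

Lemma sum_by_bucket (F : 'I_T -> R) :
  \sum_(t < T) F t = \sum_(k : I) \sum_(t < T | g t == k) F t.
Proof. exact: (partition_big g xpredT). Qed.

Definition bucket_size (k : I) : R := \sum_(t < T | g t == k) 1.
Definition bucket_hits (k : I) : R := \sum_(t < T | g t == k) (x t)%:R.
Definition bucket_mean (k : I) : R := bucket_hits k / bucket_size k.

Lemma bucket_hits_ge0 k : 0 <= bucket_hits k.
Proof. by apply: sumr_ge0 => t _; rewrite ler0n. Qed.

Lemma bucket_hits_le_size k : bucket_hits k <= bucket_size k.
Proof. by apply: ler_sum => t _; rewrite lern1 leq_b1. Qed.

Lemma bucket_size_mean k : bucket_size k * bucket_mean k = bucket_hits k.
Proof.
have [s0|s_neq0] := eqVneq (bucket_size k) 0; last by rewrite mulrC divfK.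
apply/esym/eqP; rewrite s0 mul0r eq_le bucket_hits_ge0 andbT -s0.
exact: bucket_hits_le_size.
Qed.

Lemma bucket_mean_in01 k : 0 <= bucket_mean k <= 1.
Proof.
have hits_ge0 := bucket_hits_ge0 k; have hits_le := bucket_hits_le_size k.
have [s0|s_neq0] := eqVneq (bucket_size k) 0.
  by rewrite /bucket_mean s0 invr0 mulr0 lexx ler01.
have s_gt0 : 0 < bucket_size k by rewrite lt_def s_neq0 (le_trans hits_ge0).
by rewrite divr_ge0 ?(le_trans hits_ge0) //= ler_pdivrMr // mul1r.
Qed.

Lemma bucket_sumB k (c : R) :
  \sum_(t < T | g t == k) ((x t)%:R - c) = bucket_hits k - bucket_size k * c.
Proof. by rewrite sumrB mulr_suml; under [in RHS]eq_bigr do rewrite mul1r. Qed.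

Lemma bucket_mean_calibrated : calib_set x (bucket_mean \o g).
Proof.
split=> [t|a]; first exact: bucket_mean_in01.
rewrite sum_by_bucket big1 // => k _ /=.
under eq_bigr => t /eqP-> do [].
by rewrite -mulr_suml bucket_sumB bucket_size_mean subrr mul0r.
Qed.

Lemma dist_to_bucket_mean (v : I -> R) :
  \sum_(t < T) `|v (g t) - bucket_mean (g t)| =
  \sum_(k : I) `|\sum_(t < T | g t == k) ((x t)%:R - v k)|.
Proof.
rewrite sum_by_bucket; apply: eq_bigr => k _.
under eq_bigr => t /eqP-> do [].
have s_ge0 : 0 <= bucket_size k by apply: sumr_ge0 => t _.
rewrite bucket_sumB -bucket_size_mean -mulrBr normrM ger0_norm // distrC mulr_suml.
by under [in RHS]eq_bigr do rewrite mul1r.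
Qed.

Lemma CalDist_le_bucketed (p : 'I_T -> R) (v : I -> R) :
  CalDist x p <= \sum_(t < T) `|p t - v (g t)| +
                 \sum_(k : I) `|\sum_(t < T | g t == k) ((x t)%:R - v k)|.
Proof.
rewrite -dist_to_bucket_mean -big_split /=.
apply: le_trans (_ : \sum_(t < T) `|p t - bucket_mean (g t)| <= _).
  apply: ge_inf; last by exists (bucket_mean \o g); first exact: bucket_mean_calibrated.
  by exists 0 => _ [q _ <-]; apply: sumr_ge0.
by apply: ler_sum => t _; rewrite (le_trans _ (ler_normD _ _)) // addrA subrK.
Qed.

End Bucketing.

Lemma play_le_invariant {R : realType} (F : forecaster R) (A : adversary R)
    (L : history R -> R) (P : history R -> Prop) (B : R) (T : nat) :
  valid_forecaster F -> valid_adversary A ->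
  (forall h wp b, P h -> wp \in F h -> P (rcons h (b, wp.2))) ->
  (forall h, P h -> size h = T -> L h <= B) ->
  forall n h, P h -> (size h + n)%N = T -> play F A L n h <= B.
Proof.
move=> vF vA P_rcons L_le.
elim=> [|n IH] h Ph sz /=; first by rewrite L_le -?sz ?addn0.
have [F_ge0 F_sum1] := vF h; have /andP[a_ge0 a_le1] := vA h.
have sz' b : (size (rcons h b) + n)%N = T by rewrite size_rcons addSnnS.
apply: le_trans (_ : \sum_(wp <- F h) wp.1 * B <= _); last first.
  by rewrite -mulr_suml F_sum1 mul1r.
rewrite big_seq [leRHS]big_seq.
apply: ler_sum => wp wp_in; apply: ler_wpM2l; first by case: (F_ge0 wp wp_in).
have le_b b : play F A L n (rcons h (b, wp.2)) <= B.
  by apply: IH; [exact: P_rcons | exact: sz'].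
apply: le_trans (_ : A h * B + (1 - A h) * B <= _); last first.
  by rewrite -mulrDl addrC subrK mul1r.
by apply: lerD; apply: ler_wpM2l; rewrite ?le_b ?subr_ge0.
Qed.

Section BucketForecaster.
Variables (R : realType) (m : nat).
Hypothesis m_gt0 : (0 < m)%N.

Definition grid (k : nat) : R := k%:R / m%:R.

Definition balanced (c : nat -> R) : Prop :=
  [/\ forall k, -1 <= c k <= 1, 0 <= c 0%N & c m <= 0].

Definition crossing (c : nat -> R) : nat :=
  find (fun i => c i.+1 <= 0) (iota 0 m).

Definition bucket (c : nat -> R) (b : bool) : nat :=
  if b then (crossing c).+1 else crossing c.

Definition step (c : nat -> R) (b : bool) (k : nat) : R :=
  if bucket c b == k then c k + (b%:R - grid k) else c k.

Definition counters (bs : seq bool) : nat -> R := foldl step (fun _ => 0) bs.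

Definition forecast (bs : seq bool) : R := grid (crossing (counters bs)).

Definition bucket_forecaster : forecaster R :=
  fun h => [:: (1, forecast (map fst h))].

Lemma grid_in01 {k} : (k <= m)%N -> 0 <= grid k <= 1.
Proof.
move=> k_le; have m_pos : 0 < m%:R :> R by rewrite ltr0n.
by rewrite /grid divr_ge0 ?ler0n //= ler_pdivrMr // mul1r ler_nat.
Qed.

Lemma grid0 : grid 0 = 0. Proof. by rewrite /grid mul0r. Qed.

Lemma grid_max : grid m = 1.
Proof. by rewrite /grid divff // pnatr_eq0 -lt0n. Qed.

Lemma gridS k : grid k.+1 = grid k + m%:R^-1.
Proof. by rewrite /grid -natr1 mulrDl mul1r. Qed.

Lemma crossingP {c} : balanced c ->
  [/\ (crossing c < m)%N, 0 <= c (crossing c) & c (crossing c).+1 <= 0].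
Proof.
case=> _ c0_ge0 cm_le0.
have has_crossing : has (fun i => c i.+1 <= 0) (iota 0 m).
  by apply/hasP; exists m.-1; rewrite ?mem_iota ?add0n prednK ?leqnn.
have lt_m : (crossing c < m)%N by rewrite -(size_iota 0 m) -has_find.
split=> //; last by have := nth_find 0%N has_crossing; rewrite nth_iota.
case E: (crossing c) => [|j] //.
have lt_j : (j < crossing c)%N by rewrite E.
have /negbT := before_find 0%N lt_j.
by rewrite nth_iota ?(ltn_trans lt_j) // add0n -ltNge => /ltW.
Qed.

Lemma balanced_step {c} b : balanced c -> balanced (step c b).
Proof.
move=> bal; have [lt_m c_ge0 cS_le0] := crossingP bal.
case: bal => c_bnd c0_ge0 cm_le0.
rewrite /step /bucket; case: b => /=.
- have /andP[g_ge0 g_le1] := grid_in01 lt_m.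
  have /andP[c_lb c_ub] := c_bnd (crossing c).+1.
  split=> [k||] /=.
  + by case: eqP => [<-|_] //; apply/andP; split; lra.
  + by [].
  + by case: eqP => // _; rewrite grid_max; lra.
- have /andP[g_ge0 g_le1] := grid_in01 (ltnW lt_m).
  have /andP[c_lb c_ub] := c_bnd (crossing c).
  split=> [k||] /=.
  + by case: eqP => [<-|_] //; apply/andP; split; lra.
  + by case: eqP => // _; rewrite grid0; lra.
  + by case: eqP => [m_eq|_] //; move: lt_m; rewrite m_eq ltnn.
Qed.

Lemma balanced_counters bs : balanced (counters bs).
Proof.
rewrite /counters; have : balanced (fun _ => 0) by split=> // k; rewrite lerN10 ler01.
by elim: bs (fun _ => 0) => //= b bs IH c bal; apply/IH/balanced_step.
Qed.

Lemma counters_rcons bs b : counters (rcons bs b) = step (counters bs) b.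
Proof. by rewrite /counters foldl_rcons. Qed.

Definition bucket_at (bs : seq bool) (s : nat) : nat :=
  bucket (counters (take s bs)) (nth false bs s).

Lemma counters_take bs n k : (n <= size bs)%N ->
  counters (take n bs) k =
  \sum_(s < n | bucket_at bs s == k) ((nth false bs s)%:R - grid k).
Proof.
elim: n => [|n IH] n_le; first by rewrite take0 big_ord0.
rewrite (take_nth false n_le) counters_rcons big_mkcond big_ord_recr /=.
by rewrite -big_mkcond -IH 1?ltnW // /step /bucket_at; case: eqP; rewrite ?addr0.
Qed.

Lemma forecast_near_bucket c b :
  `|grid (crossing c) - grid (bucket c b)| <= m%:R^-1.
Proof.
rewrite /bucket; case: b; last by rewrite subrr normr0 invr_ge0 ler0n.
by rewrite gridS opprD addrA subrr add0r normrN ger0_norm // invr_ge0 ler0n.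
Qed.

Lemma bucket_at_le bs s : (bucket_at bs s <= m)%N.
Proof.
have [lt_m _ _] := crossingP (balanced_counters (take s bs)).
by rewrite /bucket_at /bucket; case: ifP => _ //; apply: ltnW.
Qed.

Definition follows_forecast (h : history R) : Prop :=
  forall t, (t < size h)%N -> (nth (false, 0) h t).2 = forecast (take t (map fst h)).

Lemma follows_forecast_rcons h b : follows_forecast h ->
  follows_forecast (rcons h (b, forecast (map fst h))).
Proof.
move=> fh t; rewrite size_rcons ltnS leq_eqVlt nth_rcons map_rcons -cats1.
case/orP=> [/eqP->|lt_t]; first by rewrite ltnn eqxx take_size_cat ?size_map.
by rewrite lt_t fh // takel_cat // size_map ltnW.
Qed.

Lemma CalDist_le_of_follows_forecast T h : follows_forecast h -> size h = T ->
  CalDist (hist_x T h) (hist_p T h) <= T%:R / m%:R + m.+1%:R.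
Proof.
move=> fh sz; set bs := map fst h.
pose g (t : 'I_T) : 'I_m.+1 := inord (bucket_at bs t).
have g_eq t (k : 'I_m.+1) : (g t == k) = (bucket_at bs t == k).
  by rewrite -val_eqE /= inordK // ltnS bucket_at_le.
apply: le_trans (CalDist_le_bucketed _ g _ (fun k : 'I_m.+1 => grid k)) _.
apply: lerD.
  apply: le_trans (_ : \sum_(t < T) m%:R^-1 <= _).
    apply: ler_sum => t _; have t_lt : (t < size h)%N by rewrite sz.
    rewrite /hist_p fh // inordK ?ltnS ?bucket_at_le //.
    exact: forecast_near_bucket.
  by rewrite sumr_const card_ord mulr_natl.
apply: le_trans (_ : \sum_(k < m.+1) (1 : R) <= _); last by rewrite sumr_const card_ord.
apply: ler_sum => k _.
have -> : \sum_(t < T | g t == k) ((hist_x T h t)%:R - grid k) = counters (take T bs) k.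
  rewrite counters_take ?size_map ?sz //; apply: eq_big => t; first exact: g_eq.
  by move=> _; rewrite /hist_x -(nth_map (false, 0) false fst) // sz.
by have [bnd _ _] := balanced_counters (take T bs); rewrite ler_norml bnd.
Qed.

Lemma bucket_forecaster_valid : valid_forecaster bucket_forecaster.
Proof.
move=> h; split; last by rewrite big_seq1.
move=> wp; rewrite mem_seq1 => /eqP-> /=; split; first exact: ler01.
have [lt_m _ _] := crossingP (balanced_counters (map fst h)).
exact: grid_in01 (ltnW lt_m).
Qed.

Lemma expected_CalDist_bucket_forecaster T A : valid_adversary A ->
  expected_CalDist T bucket_forecaster A <= T%:R / m%:R + m.+1%:R.
Proof.
move=> vA; apply: (play_le_invariant _ _ _ follows_forecast) => //.
- exact: bucket_forecaster_valid.
- by move=> h wp b fh; rewrite mem_seq1 => /eqP->; apply: follows_forecast_rcons.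
- exact: CalDist_le_of_follows_forecast.
Qed.

End BucketForecaster.

Lemma nat_sqrt_bounds T : exists m, (m * m <= T < m.+1 * m.+1)%N.
Proof.
elim: T => [|T [m /andP[mm_le lt_mm]]]; first by exists 0%N.
case: (ltnP T.+1 (m.+1 * m.+1)) => [lt_T|le_T].
  by exists m; rewrite lt_T andbT ltnW.
by exists m.+1; rewrite le_T /=; nia.
Qed.

Theorem theorem3 (R : realType) :
  exists C : R, 0 < C /\
    forall T : nat, (0 < T)%N ->
      exists F : forecaster R, @valid_forecaster R F /\
        forall A : adversary R, @valid_adversary R A ->
          @expected_CalDist R T F A <= C * Num.sqrt (T%:R).
Proof.
exists 6; split=> [|T T_gt0]; first by lra.
have [m /andP[mm_le lt_mm]] := nat_sqrt_bounds T.
have m_gt0 : (0 < m)%N by case: m mm_le lt_mm => //; nia.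
exists (bucket_forecaster R m); split=> [|A vA]; first exact: bucket_forecaster_valid.
apply: le_trans (@expected_CalDist_bucket_forecaster R m m_gt0 T A vA) _.
have m_ge1 : 1 <= m%:R :> R by rewrite ler1n.
have m_le_sqrt : m%:R <= Num.sqrt T%:R :> R.
  by rewrite -(ger0_norm (ler0n R m)) -sqrtr_sqr ler_wsqrtr // -natrX ler_nat.
have T_div_m : T%:R / m%:R <= 4 * m%:R :> R.
  by rewrite ler_pdivrMr ?ltr0n // -!natrM ler_nat; nia.
rewrite -natr1; lra.
Qed.
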